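(* Let $G$ be a finite simple graph on the vertex set $V(G)=\{x_{11},\ldots,x_{n1}\}$ with no isolated vertex. Let $G_1,\ldots,G_n$ be connected finite simple graphs on vertex sets $V(G_i)=\{x_{i1},\ldots,x_{im_i}\}$ with $m_i\geq 2$ for every $i$, where the sets $V(G_i)\setminus\{x_{i1}\}$ are pairwise disjoint and disjoint from $V(G)$. Let $G(G_1,\ldots,G_n)$ be the graph obtained by attaching $G_i$ to $G$ at $x_{i1}$ for every $i$. Then $G(G_1,\ldots,G_n)$ is unmixed if and only if $G_i$ and $G_i\setminus\{x_{i1}\}$ are unmixed for every $i=1,\ldots,n$.
   Context: $G(G_1,\ldots,G_n)$ has vertex set $\bigcup_i V(G_i)$ and edge set $E(G)\cup\bigcup_i E(G_i)$. For a vertex $v$, $H\setminus\{v\}$ denotes the induced subgraph on $V(H)\setminus\{v\}$. A graph is unmixed if all its maximal independent sets have the same cardinality. *)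

From mathcomp Require Import all_boot.
Set Implicit Arguments. Unset Strict Implicit. Unset Printing Implicit Defensive.

Definition simple_graph (T : finType) (e : rel T) : Prop :=
  symmetric e /\ irreflexive e.

Definition graph_connected (T : finType) (e : rel T) : Prop :=
  forall x y : T, connect e x y.

Definition no_isolated_vertex (T : finType) (e : rel T) : Prop :=
  forall x : T, exists y : T, e x y.

Definition independent (T : finType) (e : rel T) (S : {set T}) : bool :=
  [forall x in S, forall y in S, ~~ e x y].

Definition maximal_independent_in (T : finType) (V : {set T}) (e : rel T)
    (S : {set T}) : bool :=
  [&& S \subset V, independent e S &
      [forall x in V :\: S, ~~ independent e (x |: S)]].

Definition unmixed_in (T : finType) (V : {set T}) (e : rel T) : Prop :=
  forall S1 S2 : {set T},
    maximal_independent_in V e S1 -> maximal_independent_in V e S2 ->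
    #|S1| = #|S2|.

Definition unmixed (T : finType) (e : rel T) : Prop := unmixed_in [set: T] e.

(* H \ {v}: the subgraph induced on V(H) \ {v}, expressed as unmixedness
   on the vertex set [set: T] minus v. *)
Definition unmixed_minus (T : finType) (e : rel T) (v : T) : Prop :=
  unmixed_in [set~ v] e.

(* Vertices of G(G_1,...,G_n): pairs (i, a) with a : 'I_(m i); the vertex
   (i, 0) is x_{i1} (a vertex of G), and (i, a) for a > 0 is x_{i,a+1}. *)
Definition attach (n : nat) (m : 'I_n -> nat) (G : rel 'I_n)
    (Gs : forall i : 'I_n, rel 'I_(m i)) : rel {i : 'I_n & 'I_(m i)} :=
  fun u v =>
    [&& val (tagged u) == 0, val (tagged v) == 0 & G (tag u) (tag v)]
    || ((tag u == tag v) && Gs (tag u) (tagged u) (tagged_as u v)).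

From mathcomp Require Import all_boot.
Set Implicit Arguments. Unset Strict Implicit. Unset Printing Implicit Defensive.

(* A maximal independent set of G(G_1,...,G_n) meets each G_i in a maximal
   independent set of G_i if it contains x_i1, and of G_i \ x_i1 otherwise;
   conversely such fibres glue to a maximal independent set as long as the
   chosen base vertices are independent in G and each omitted x_i1 is
   dominated.  As G_i is connected with at least two vertices, x_i1 has a
   neighbour y, and a maximal independent set of G_i \ x_i1 through y is
   maximal in G_i as well.  If G_i and G_i \ x_i1 are unmixed, this common
   set fixes the size of every fibre.  Conversely, freezing such sets on the
   other components (and, to dominate x_i1, a maximal set through x_k1 for a
   G-neighbour k of i) and varying only the fibre at i shows that G_i and
   G_i \ x_i1 are unmixed. *)

Section Independence.
Variables (T : finType) (e : rel T).

Lemma independentP (S : {set T}) :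
  reflect (forall x y, x \in S -> y \in S -> ~~ e x y) (independent e S).
Proof.
apply: (iffP forallP) => [iS x y xS yS | iS x].
  by have /implyP/(_ xS)/forallP/(_ y)/implyP/(_ yS) := iS x.
by apply/implyP => xS; apply/forallP => y; apply/implyP => yS; apply: iS.
Qed.

Lemma independentS (A B : {set T}) :
  A \subset B -> independent e B -> independent e A.
Proof.
move=> /subsetP sAB /independentP iB; apply/independentP => x y /sAB xB /sAB.
exact: iB.
Qed.

Lemma maximal_independent_superset (V S : {set T}) :
  S \subset V -> independent e S ->
  exists2 S' : {set T}, S \subset S' & maximal_independent_in V e S'.
Proof.
move=> SV iS.
pose P := [pred S' : {set T} |
  [&& S \subset S', S' \subset V & independent e S']].
have PS : P S by rewrite /= subxx SV.
case: (arg_maxnP (fun S' : {set T} => #|S'|) PS).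
move=> S' /and3P[sS' S'V iS'] S'max.
exists S' => //; apply/and3P; split => //; apply/forall_inP => x.
rewrite in_setD => /andP[xS' xV]; apply/negP => ixS'.
have PxS' : P (x |: S').
  by rewrite /= ixS' (subset_trans sS' (subsetUr _ _)) subUset sub1set xV S'V.
by have := S'max _ PxS'; rewrite cardsU1 xS' /= ltnn.
Qed.

Lemma unmixed_in2_card (V W S0 S : {set T}) :
  unmixed_in V e -> unmixed_in W e ->
  maximal_independent_in V e S0 -> maximal_independent_in W e S0 ->
  maximal_independent_in V e S || maximal_independent_in W e S ->
  #|S| = #|S0|.
Proof.
by move=> uV uW S0V S0W /orP[] maxS; [apply: uV maxS S0V | apply: uW maxS S0W].
Qed.

Lemma connect_neighbour x y : connect e x y -> x != y -> exists z, e x z.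
Proof.
case/connectP => [[|z p]] /=; first by move=> _ ->; rewrite eqxx.
by case/andP => exz _ _ _; exists z.
Qed.

Lemma maximal_independent_setC1_notin x S :
  maximal_independent_in [set~ x] e S -> x \notin S.
Proof.
by case/and3P => /subsetP sub _ _; apply/negP => /sub; rewrite in_setC1 eqxx.
Qed.

Hypotheses (e_sym : symmetric e) (e_irr : irreflexive e).

Lemma independent_set1 x : independent e [set x].
Proof. by apply/independentP => a b /set1P-> /set1P->; rewrite e_irr. Qed.

Lemma maximal_independent_inP (V S : {set T}) :
  reflect [/\ S \subset V, independent e S &
              forall x, x \in V -> x \notin S -> exists2 y, y \in S & e x y]
          (maximal_independent_in V e S).
Proof.
apply: (iffP and3P) => -[SV iS maxS]; split => //.
  move=> x xV xS; have /forall_inP/(_ x) := maxS.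
  rewrite in_setD xS xV => /(_ isT) dep.
  suff /exists_inP[y yS exy] : [exists y in S, e x y] by exists y.
  apply: contraR dep => /exists_inPn noNb; apply/independentP => u v.
  rewrite !in_setU1 => /predU1P[->|uS] /predU1P[->|vS].
  - by rewrite e_irr.
  - exact: noNb.
  - by rewrite e_sym; apply: noNb.
  - by move/independentP: iS; apply.
apply/forall_inP => x; rewrite in_setD => /andP[xS xV].
have [y yS exy] := maxS x xV xS.
apply/negP => /independentP/(_ x y).
by rewrite !in_setU1 eqxx yS orbT exy => /(_ isT isT).
Qed.

Lemma maximal_independent_containing x :
  exists2 S : {set T}, maximal_independent_in setT e S & x \in S.
Proof.
have [S xS maxS] :=
  maximal_independent_superset (subsetT [set x]) (independent_set1 x).
by exists S => //; rewrite -sub1set.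
Qed.

(* A maximal independent set of [G \ x] containing a neighbour of [x] is also
   maximal in [G]. *)
Lemma maximal_independent_setC1_setT x y : e x y ->
  exists2 S : {set T},
    maximal_independent_in [set~ x] e S & maximal_independent_in setT e S.
Proof.
move=> exy; have yx : y \in [set~ x].
  by rewrite in_setC1; apply: contraTneq exy => ->; rewrite e_irr.
have [S yS maxS] : exists2 S : {set T},
    [set y] \subset S & maximal_independent_in [set~ x] e S.
  by apply: maximal_independent_superset; rewrite ?sub1set ?independent_set1.
exists S => //; case/maximal_independent_inP: maxS => _ iS domS.
apply/maximal_independent_inP; split=> [|//|z _ zS]; first exact: subsetT.
have [->|zx] := eqVneq z x; first by exists y; rewrite -?sub1set.
by apply: domS; rewrite // in_setC1.
Qed.

End Independence.

Lemma set_family_choice (I : Type) (T_ : I -> finType)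
    (P : forall i, pred {set T_ i}) :
  (forall i, exists A, P i A) ->
  exists F : forall i, {set T_ i}, forall i, P i (F i).
Proof.
move=> exP; exists (fun i => odflt set0 [pick A | P i A]) => i.
by case: pickP => [//|noA]; have [A] := exP i; rewrite noA.
Qed.

Section Attach.
Unset Implicit Arguments.
Variables (n : nat) (G : rel 'I_n) (m : 'I_n -> nat)
  (Gs : forall i : 'I_n, rel 'I_(m i)) (x1 : forall i : 'I_n, 'I_(m i)).
Set Implicit Arguments.
Hypotheses (hx1 : forall i : 'I_n, val (x1 i) = 0) (hG : simple_graph G)
  (hGs : forall i : 'I_n, simple_graph (Gs i)).

Local Notation vertex := {i : 'I_n & 'I_(m i)}.
Local Notation H := (attach G Gs).
Local Notation tg j a := (@Tagged _ j (fun k => 'I_(m k)) a).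

Lemma tg_inj j : injective (fun a : 'I_(m j) => tg j a).
Proof. by move=> a b /(congr1 (tagged_as (tg j a))); rewrite !tagged_asE. Qed.

Lemma attachE j k a b : H (tg j a) (tg k b) =
  [&& a == x1 j, b == x1 k & G j k]
  || (j == k) && Gs j a (tagged_as (tg j a) (tg k b)).
Proof. by rewrite /attach /= -!(inj_eq val_inj) !hx1. Qed.

Lemma attach_same j a b : H (tg j a) (tg j b) = Gs j a b.
Proof. by rewrite attachE eqxx tagged_asE hG.2 !andbF. Qed.

Lemma attach_sym : symmetric H.
Proof.
case=> j a [k b]; rewrite !attachE hG.1.
case: (eqVneq j k) => [ejk|njk].
  by subst k; rewrite !tagged_asE (hGs j).1 andbCA.
by rewrite !orbF andbCA.
Qed.

Lemma attach_irr : irreflexive H.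
Proof. by case=> j a; rewrite attach_same (hGs j).2. Qed.

Local Notation maxP_H := (maximal_independent_inP attach_sym attach_irr).
Local Notation maxP_Gs := (maximal_independent_inP (hGs _).1 (hGs _).2).

Definition fiber (S : {set vertex}) j : {set 'I_(m j)} :=
  [set a | tg j a \in S].

Definition glue (F : forall j, {set 'I_(m j)}) : {set vertex} :=
  [set u | tagged u \in F (tag u)].

Lemma fiberE S j a : (a \in fiber S j) = (tg j a \in S).
Proof. by rewrite inE. Qed.

Lemma glueE F j a : (tg j a \in glue F) = (a \in F j).
Proof. by rewrite inE. Qed.

Lemma fiber_glue F j : fiber (glue F) j = F j.
Proof. by apply/setP => a; rewrite fiberE glueE. Qed.

Lemma card_fiber (S : {set vertex}) : #|S| = \sum_(j < n) #|fiber S j|.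
Proof.
rewrite -sum1_card (partition_big (fun u : vertex => tag u) xpredT) //=.
apply: eq_bigr => j _; rewrite sum1_card -(card_imset _ (@tg_inj j)).
apply: eq_card => -[k b]; rewrite -topredE /=.
apply/andP/imsetP => [[bS /eqP ekj]|[a aF [ekj]]].
  by subst k; exists b; rewrite ?fiberE.
by subst k => /= /tg_inj ->; rewrite -fiberE aF eqxx.
Qed.

Lemma card_glue F : #|glue F| = \sum_(j < n) #|F j|.
Proof. by rewrite card_fiber; apply: eq_bigr => j _; rewrite fiber_glue. Qed.

Lemma card_glue_dfwith F i (A : {set 'I_(m i)}) :
  #|glue (dfwith F A)| = #|A| + \sum_(j < n | j != i) #|F j|.
Proof.
rewrite card_glue (bigD1 i) //= dfwith_in; congr (_ + _).
by apply: eq_bigr => j ij; rewrite dfwith_out // eq_sym.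
Qed.

Lemma unmixed_glue_dfwith_card F i (A B : {set 'I_(m i)}) : unmixed H ->
  maximal_independent_in setT H (glue (dfwith F A)) ->
  maximal_independent_in setT H (glue (dfwith F B)) -> #|A| = #|B|.
Proof.
by move=> uH maxA /(uH _ _ maxA); rewrite !card_glue_dfwith => /addIn.
Qed.

Lemma fiber_maximal S j : maximal_independent_in setT H S ->
  maximal_independent_in setT (Gs j) (fiber S j) ||
  maximal_independent_in [set~ x1 j] (Gs j) (fiber S j).
Proof.
case/maxP_H => _ iS domS.
have iF : independent (Gs j) (fiber S j).
  apply/independentP => a b; rewrite !fiberE -attach_same.
  by move/independentP: iS; apply.
have domF a : a != x1 j -> a \notin fiber S j ->
    exists2 b, b \in fiber S j & Gs j a b.
  rewrite fiberE => ax aS; have [[k b] bS] := domS (tg j a) (in_setT _) aS.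
  rewrite attachE (negbTE ax) /= => /andP[/eqP ejk]; subst k.
  by rewrite tagged_asE => ab; exists b; rewrite ?fiberE.
have [xF|xF] := boolP (x1 j \in fiber S j); apply/orP; [left|right];
  apply/maxP_Gs; split => //.
- by move=> a _ aF; apply: domF => //; apply: contraNneq aF => ->.
- by apply/subsetP => a aF; rewrite in_setC1; apply: contraNneq xF => <-.
- by move=> a; rewrite in_setC1; apply: domF.
Qed.

Lemma glue_maximal F :
  (forall j, maximal_independent_in setT (Gs j) (F j) \/
     maximal_independent_in [set~ x1 j] (Gs j) (F j) /\
     exists2 k, G j k & x1 k \in F k) ->
  independent G [set j | x1 j \in F j] ->
  maximal_independent_in setT H (glue F).
Proof.
move=> maxF iX; apply/maxP_H.
have iF j : independent (Gs j) (F j) by case: (maxF j) => [|[]] /and3P[].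
split; first exact: subsetT.
  apply/independentP => -[j a] [k b]; rewrite !glueE attachE => aF bF.
  apply/negP.
  case/orP => [/and3P[/eqP ax /eqP bx Gjk]|/andP[/eqP ejk]].
    move/independentP: iX => /(_ j k); rewrite !inE -ax -bx aF bF Gjk.
    by move=> /(_ isT isT).
  subst k; rewrite tagged_asE => ab.
  by move/independentP: (iF j) => /(_ a b aF bF); rewrite ab.
move=> -[j a] _; rewrite glueE => aF.
case: (maxF j) => [maxFj|[maxFj [k Gjk xk]]].
  case/maxP_Gs: maxFj => _ _ /(_ a (in_setT _) aF) [b bF ab].
  by exists (tg j b); rewrite ?glueE ?attach_same.
case/maxP_Gs: maxFj => _ _ domF; have [ax|ax] := eqVneq a (x1 j).
  by exists (tg k (x1 k)); rewrite ?glueE // attachE ax !eqxx Gjk.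
have [|b bF ab] := domF a _ aF; first by rewrite in_setC1.
by exists (tg j b); rewrite ?glueE ?attach_same.
Qed.

Lemma exists_setC1_setT_maximal_family : (forall j, exists y, Gs j (x1 j) y) ->
  exists2 T : forall j, {set 'I_(m j)},
    forall j, maximal_independent_in [set~ x1 j] (Gs j) (T j) &
    forall j, maximal_independent_in setT (Gs j) (T j).
Proof.
move=> x1_nb; pose P j (A : {set 'I_(m j)}) :=
  maximal_independent_in [set~ x1 j] (Gs j) A &&
  maximal_independent_in setT (Gs j) A.
have [T hT] : exists T, forall j, P j (T j).
  apply: set_family_choice => j; have [y x1y] := x1_nb j.
  have [A maxC1 maxT] := maximal_independent_setC1_setT (hGs j).1 (hGs j).2 x1y.
  by exists A; rewrite /P maxC1.
by exists T => j; case/andP: (hT j).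
Qed.

Lemma exists_x1_maximal_family : exists2 U : forall j, {set 'I_(m j)},
  forall j, maximal_independent_in setT (Gs j) (U j) & forall j, x1 j \in U j.
Proof.
pose P j (A : {set 'I_(m j)}) :=
  maximal_independent_in setT (Gs j) A && (x1 j \in A).
have [U hU] : exists U, forall j, P j (U j).
  apply: set_family_choice => j.
  have [A maxA x1A] := maximal_independent_containing (hGs j).2 (x1 j).
  by exists A; rewrite /P maxA.
by exists U => j; case/andP: (hU j).
Qed.

Section Witnesses.
Variable T : forall j, {set 'I_(m j)}.
Hypotheses (T_setC1 : forall j, maximal_independent_in [set~ x1 j] (Gs j) (T j))
  (T_setT : forall j, maximal_independent_in setT (Gs j) (T j)).

Lemma glue_dfwith_maximal i A : maximal_independent_in setT (Gs i) A ->
  maximal_independent_in setT H (glue (dfwith T A)).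
Proof.
move=> maxA; apply: glue_maximal => [j|].
  by left; case: dfwithP.
apply: independentS (independent_set1 hG.2 i); apply/subsetP => j; rewrite !inE.
case: dfwithP => [_|{}j _]; first exact: eqxx.
by rewrite (negbTE (maximal_independent_setC1_notin (T_setC1 j))).
Qed.

Variable U : forall j, {set 'I_(m j)}.
Hypotheses (U_setT : forall j, maximal_independent_in setT (Gs j) (U j))
  (x1_U : forall j, x1 j \in U j).

Lemma glue_dfwith_setC1_maximal i k A : G i k ->
  maximal_independent_in [set~ x1 i] (Gs i) A ->
  maximal_independent_in setT H (glue (dfwith (dfwith T (U k)) A)).
Proof.
move=> Gik maxA; have ik : i != k by apply: contraTneq Gik => ->; rewrite hG.2.
apply: glue_maximal => [j|].
  case: dfwithP => [|{}j _].
    by right; split=> //; exists k; rewrite // dfwith_out // dfwith_in.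
  by left; case: dfwithP.
apply: independentS (independent_set1 hG.2 k); apply/subsetP => j; rewrite !inE.
case: dfwithP => [|{}j _].
  by rewrite (negbTE (maximal_independent_setC1_notin maxA)).
case: dfwithP => [_|{}j _]; first exact: eqxx.
by rewrite (negbTE (maximal_independent_setC1_notin (T_setC1 j))).
Qed.

End Witnesses.

End Attach.

Theorem proposition3p2 (n : nat) (G : rel 'I_n) (m : 'I_n -> nat)
    (Gs : forall i : 'I_n, rel 'I_(m i))
    (x1 : forall i : 'I_n, 'I_(m i))
    (hx1 : forall i, val (x1 i) = 0)
    (hG : simple_graph G) (hGiso : no_isolated_vertex G)
    (hm : forall i, 2 <= m i)
    (hGs : forall i, simple_graph (Gs i))
    (hGc : forall i, graph_connected (Gs i)) :
  unmixed (attach G Gs) <->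
  (forall i : 'I_n, unmixed (Gs i) /\ unmixed_minus (Gs i) (x1 i)).
Proof.
have x1_nb j : exists y, Gs j (x1 j) y.
  apply: (connect_neighbour (hGc j (x1 j) (Ordinal (hm j)))).
  by rewrite -(inj_eq val_inj) /= hx1.
have [T T_setC1 T_setT] := exists_setC1_setT_maximal_family hGs x1_nb.
split=> [uH i | uGs S1 S2 maxS1 maxS2].
  have [U U_setT x1_U] := exists_x1_maximal_family x1 hGs.
  have [k Gik] := hGiso i.
  split=> A B maxA maxB.
    apply: (unmixed_glue_dfwith_card (F := T) uH);
      by apply: glue_dfwith_maximal.
  apply: (unmixed_glue_dfwith_card (F := dfwith T (U k)) uH);
    by apply: glue_dfwith_setC1_maximal Gik _.
rewrite !card_fiber; apply: eq_bigr => j _; have [uGj uGj'] := uGs j.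
have card_fiberj S := unmixed_in2_card uGj uGj' (T_setT j) (T_setC1 j)
  (fiber_maximal hx1 hG hGs j S).
by rewrite (card_fiberj _ maxS1) (card_fiberj _ maxS2).
Qed.
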